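(* Fix an integer $L\ge 1$ and $\alpha>0$, and let $N_{RF}=1$ or $N_{RF}=L$. For the IT-SU interleaved training scheme with $N_t$ beams, $L$ channel paths, $N_{RF}$ RF chains and threshold $\alpha$ described in the context, the average training length satisfies, as $N_t\to\infty$, $$T_{\text{IT-SU}}=\frac{N_t}{L+1}+\mathcal O(1),$$ where $\mathcal O(1)$ denotes a quantity bounded as $N_t\to\infty$ (with $L,\alpha$ fixed).
   Context: Channel model: for integers $N_t\ge L$, a random subset $\mathcal I\subset\{1,\dots,N_t\}$ with $|\mathcal I|=L$ is drawn uniformly among all $L$-element subsets; conditionally on $\mathcal I$, the coefficients $\bar h_i$, $i\in\mathcal I$, are i.i.d. circularly symmetric complex Gaussian $\mathcal{CN}(0,1/L)$, and $\bar h_i=0$ for $i\notin\mathcal I$. IT-SU scheme (with $N_{RF}\ge1$ RF chains and threshold $\alpha>0$): for $i=1,2,\dots,N_t$ in order, beam $i$ is trained, i.e. $\bar h_i$ becomes known. After step $i$, let $\mathcal B_i=\{l\le i:\bar h_l\neq 0\}$, $L_{B_i}=\min(N_{RF},|\mathcal B_i|)$, and let $\mathcal S_i\subset\mathcal B_i$ be the indices of the $L_{B_i}$ elements of $\mathcal B_i$ with largest $|\bar h_l|$. The training terminates at step $i$ if $\bar h_i\ne 0$ and $\sum_{l\in\mathcal S_i}|\bar h_l|^2>\alpha/N_t$; otherwise it proceeds to step $i+1$. The training length $T$ is the step at which the training terminates, and $T=N_t$ if it never terminates. The average training length is $T_{\text{IT-SU}}=\mathrm E[T]$. *)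

From HB Require Import structures.
From mathcomp Require Import all_boot all_order all_algebra.
From mathcomp Require Import all_classical all_reals all_analysis.
Set Implicit Arguments. Unset Strict Implicit. Unset Printing Implicit Defensive.
Import Order.TTheory GRing.Theory Num.Theory.
Local Open Scope ring_scope.

Section ITSU.
Variable R : realType.

(* A complex number is represented by its pair (real part, imaginary part). *)
(* Expectation of f(z) for z ~ CN(0, 2 s^2): real and imaginary parts are
   independent N(0, s^2) (s = standard deviation). *)
Definition cgauss_int (s : R) (f : R * R -> \bar R) : \bar R :=
  (\int[normal_prob 0 s]_x \int[normal_prob 0 s]_y f (x, y))%E.

(* Expectation of f(g) where g_0, ..., g_{n-1} are i.i.d. complex Gaussians
   as above (iterated integrals); coordinates >= n are set to 0. *)
Fixpoint iter_cgauss (s : R) (n : nat) (f : (nat -> R * R) -> \bar R)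
  : \bar R :=
  match n with
  | 0 => f (fun _ => (0, 0))
  | n'.+1 => cgauss_int s (fun z =>
      iter_cgauss s n' (fun g => f (fun k => if k == n' then z else g k)))
  end.

(* Beams are indexed 0..Nt-1 internally (beam index j here is beam j+1 of
   the paper). The channel coefficient of beam j is
     hbar_j = g_j if j \in I, and 0 otherwise,
   with g_j i.i.d. CN(0,1/L) independent of the uniform L-subset I. *)
Definition in_support (Nt : nat) (I : {set 'I_Nt}) (j : nat) : bool :=
  j \in [seq nat_of_ord k | k <- enum I].

Definition hnz (Nt : nat) (I : {set 'I_Nt}) (g : nat -> R * R) (j : nat)
  : bool := in_support I j && (g j != (0, 0)).

(* |hbar_j|^2 (only used for j with hbar_j != 0) *)
Definition pw (g : nat -> R * R) (j : nat) : R := (g j).1 ^+ 2 + (g j).2 ^+ 2.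

Definition Bset (Nt : nat) (I : {set 'I_Nt}) (g : nat -> R * R) (j : nat)
  : seq nat := [seq l <- iota 0 j.+1 | hnz I g l].

Definition topsum (NRF Nt : nat) (I : {set 'I_Nt}) (g : nat -> R * R)
  (j : nat) : R :=
  \sum_(x <- take (minn NRF (size (Bset I g j)))
                  (sort (fun a b : R => b <= a) [seq pw g l | l <- Bset I g j]))
     x.

Definition stops (NRF Nt : nat) (alpha : R) (I : {set 'I_Nt})
  (g : nat -> R * R) (j : nat) : bool :=
  hnz I g j && (topsum NRF I g j > alpha / Nt%:R).

(* training length: first (1-based) step at which training terminates,
   Nt if it never does *)
Definition train_len (NRF Nt : nat) (alpha : R) (I : {set 'I_Nt})
  (g : nat -> R * R) : nat :=
  \big[minn/Nt]_(j < Nt | stops NRF alpha I g j) j.+1.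

(* standard deviation of real/imag parts of a CN(0,1/L) variable *)
Definition sdL (L : nat) : R := Num.sqrt ((L%:R *+ 2)^-1).

(* T_IT-SU = E[T]: uniform average over L-subsets I, Gaussian expectation
   over the coefficients. *)
Definition avg_train_len (L NRF Nt : nat) (alpha : R) : \bar R :=
  ((\sum_(I : {set 'I_Nt} | #|I| == L)
      iter_cgauss (sdL L) Nt (fun g => ((train_len NRF alpha I g)%:R)%:E))
   * ((#|[set I : {set 'I_Nt} | #|I| == L]|%:R)^-1)%:E)%E.

End ITSU.

(* The training cannot stop before the first nonzero beam m = min I, and with
   N_RF >= 1 it stops exactly there as soon as |hbar_m|^2 > alpha/Nt, since
   then S_m = {m}.  Otherwise both Gaussian components of hbar_m lie in
   [-r, r] with r^2 = alpha/Nt, an event of probability at most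
   (2 r peak)^2 = 4 alpha peak^2 / Nt (peak = maximum of the normal density),
   on which the training still lasts at most Nt steps.  Hence, for a fixed
   support I, E[T] lies between m + 1 and m + 1 + 4 alpha peak^2.  Averaging
   over uniform L-subsets, the hockey-stick identity gives
   E[min I + 1] = C(Nt+1, L+1) / C(Nt, L) = (Nt + 1) / (L + 1). *)

From mathcomp Require Import all_boot all_order all_algebra.
From mathcomp Require Import all_classical all_reals all_analysis.
From mathcomp Require Import measurable_realfun ring lra.
Set Implicit Arguments. Unset Strict Implicit. Unset Printing Implicit Defensive.
Import Order.TTheory GRing.Theory Num.Theory.

Section BigMinn.
Variables (T : finType) (P : pred T) (n : nat) (F : T -> nat).

Lemma bigminn_le i : P i -> \big[minn/n]_(j | P j) F j <= F i.
Proof.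
move=> Pi; rewrite -big_filter.
have : i \in [seq j <- index_enum T | P j] by rewrite mem_filter Pi mem_index_enum.
elim: [seq j <- index_enum T | P j] => // j s IH.
rewrite inE big_cons => /predU1P[<- | /IH]; first exact: geq_minl.
exact/leq_trans/geq_minr.
Qed.

Lemma bigminn_le_id : \big[minn/n]_(j | P j) F j <= n.
Proof. by elim/big_rec: _ => // i x _ xn; rewrite geq_min xn orbT. Qed.

Lemma leq_bigminn k : k <= n -> (forall i, P i -> k <= F i) ->
  k <= \big[minn/n]_(i | P i) F i.
Proof.
by move=> kn kF; apply: (big_ind (leq k)) => // x y kx ky; rewrite leq_min kx.
Qed.

End BigMinn.

Definition first_elt n (I : {set 'I_n}) : nat := \big[minn/n]_(i in I) i.

Lemma first_elt_le n (I : {set 'I_n}) i : i \in I -> first_elt I <= i.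
Proof. exact: bigminn_le. Qed.

Lemma first_eltP n (I : {set 'I_n}) : (0 < #|I|)%N ->
  exists2 k : 'I_n, k \in I & first_elt I = k.
Proof.
case/card_gt0P => i0 i0I; have [k kI kmin] := arg_minnP (@nat_of_ord n) i0I.
exists k => //; apply/eqP; rewrite eqn_leq first_elt_le //=.
exact: leq_bigminn (ltnW (ltn_ord k)) kmin.
Qed.

Lemma first_elt_lt n (I : {set 'I_n}) : 0 < #|I| -> first_elt I < n.
Proof. by case/first_eltP => k _ ->. Qed.

Lemma leq_first_elt n (I : {set 'I_n}) j : j <= n ->
  (j <= first_elt I) = (I \subset [set i : 'I_n | j <= i]).
Proof.
move=> jn; apply/idP/fintype.subsetP => [jI i iI | jI].
  by rewrite inE (leq_trans jI) ?first_elt_le.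
by apply: leq_bigminn => // i /jI; rewrite inE.
Qed.

Lemma card_ord_lt n m : m <= n -> #|[set i : 'I_n | i < m]| = m.
Proof.
move=> mn; rewrite -sum1_card (eq_bigl (fun i : 'I_n => i < m)) => [|i].
  by rewrite (big_ord_narrow (F := fun=> 1) mn) sum_nat_const card_ord muln1.
by rewrite inE.
Qed.

Lemma card_ord_geq n j : j <= n -> #|[set i : 'I_n | j <= i]| = n - j.
Proof.
move=> jn; have -> : [set i : 'I_n | j <= i] = ~: [set i : 'I_n | i < j].
  by apply/setP => i; rewrite !inE leqNgt.
have := cardsC [set i : 'I_n | i < j].
rewrite card_ord_lt // card_ord => card_n.
by rewrite -[in RHS]card_n addKn.
Qed.

Lemma sum_ord_leq n m : m < n -> \sum_(j < n) (j <= m) = m.+1.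
Proof.
move=> mn; rewrite -[RHS](card_ord_lt mn) -sum1_card [RHS]big_mkcond /=.
by apply: eq_bigr => j _; rewrite inE ltnS; case: (j <= m).
Qed.

Lemma hockey_stick n m : 0 < m -> \sum_(j < n) 'C(n - j, m) = 'C(n.+1, m.+1).
Proof.
move=> m0; elim: n => [|n IH]; first by rewrite big_ord0 bin_small.
rewrite big_ord_recl subn0 (eq_bigr (fun j : 'I_n => 'C(n - j, m))) => [|j _].
  by rewrite IH [in RHS]binS addnC.
by rewrite /bump /= subSS.
Qed.

Lemma sum_first_elt n m : 0 < m ->
  \sum_(I : {set 'I_n} | #|I| == m) (first_elt I).+1 = 'C(n.+1, m.+1).
Proof.
move=> m0; rewrite -hockey_stick //.
rewrite (eq_bigr (fun I => \sum_(j < n) (j <= first_elt I))); last first.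
  by move=> I /eqP Im; rewrite sum_ord_leq // first_elt_lt // Im.
rewrite exchange_big; apply: eq_bigr => j _.
rewrite -(card_ord_geq (ltnW (ltn_ord j))) -cards_draws cardsE -sum1_card.
rewrite big_mkcond [RHS]big_mkcond; apply: eq_bigr => I _ /=.
rewrite unfold_in -leq_first_elt ?(ltnW (ltn_ord j)) //.
by case: (#|I| == m); rewrite ?andbT ?andbF //; case: (j <= _).
Qed.

Local Open Scope ring_scope.

Lemma bin_ratio (R : numFieldType) n m : (m <= n)%N ->
  'C(n.+1, m.+1)%:R / 'C(n, m)%:R = n.+1%:R / m.+1%:R :> R.
Proof.
move=> mn; apply/eqP; rewrite eqr_div ?pnatr_eq0 -?lt0n ?bin_gt0 // -!natrM eqr_nat.
by rewrite mulnC -(mul_bin_diag n.+1).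
Qed.

Lemma mean_dist_le (R : realFieldType) (T : finType) (P : pred T)
    (f g : T -> R) (K : R) :
  (0 < #|P|)%N -> (forall i, P i -> g i <= f i <= g i + K) ->
  `|(\sum_(i | P i) f i) / #|P|%:R - (\sum_(i | P i) g i) / #|P|%:R| <= K.
Proof.
move=> P_gt0 fg; rewrite -mulrBl -sumrB.
have sum_ge0 : 0 <= \sum_(i | P i) (f i - g i).
  by apply: sumr_ge0 => i /fg/andP[gf _]; rewrite subr_ge0.
rewrite ger0_norm ?mulr_ge0 ?invr_ge0 // ler_pdivrMr ?ltr0n // mulr_natr.
rewrite -sumr_const.
by apply: ler_sum => i /fg/andP[_ fgK]; rewrite lerBlDl.
Qed.

Lemma fine_bounded (R : numDomainType) (a b : R) (x : \bar R) :
  (a%:E <= x <= b%:E)%E -> x = (fine x)%:E /\ a <= fine x <= b.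
Proof. by case: x => [r | |] //=; rewrite ?lee_fin // leye_eq andbF. Qed.

Section NonnegIntegral.
Context {R : realType} (d : measure_display) (T : measurableType d).
Variable mu : {measure set T -> \bar R}.
Local Open Scope ereal_scope.

(* Unlike [ge0_le_integral], no measurability is required: the integral of a
   nonnegative function is a supremum over the simple functions below it. *)
Lemma ge0_le_integralT (f1 f2 : T -> \bar R) :
  (forall x, 0 <= f1 x) -> (forall x, f1 x <= f2 x) ->
  \int[mu]_x f1 x <= \int[mu]_x f2 x.
Proof.
move=> f1_ge0 f12; have f2_ge0 x : 0 <= f2 x := le_trans (f1_ge0 x) (f12 x).
rewrite (ge0_integralTE mu f1_ge0) (ge0_integralTE mu f2_ge0).
apply: ereal_sup_le => _ [h hf1 <-]; exists h => //= x.
exact: le_trans (hf1 x) (f12 x).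
Qed.

End NonnegIntegral.

Section ComplexGaussian.
Variables (R : realType) (s : R).
Local Open Scope ereal_scope.

Lemma integral_normal_prob_cst (c : \bar R) : \int[normal_prob 0 s]_x c = c.
Proof.
rewrite (integral_cst _ measurableT) [X in _ * X](_ : _ = 1) ?mule1 //.
exact: probability_setT.
Qed.

Lemma cgauss_int_ge0 (F : R * R -> \bar R) :
  (forall z, 0 <= F z) -> 0 <= cgauss_int s F.
Proof. by move=> F0; do 2![apply: integral_ge0 => ? _]; exact: F0. Qed.

Lemma cgauss_int_le (F1 F2 : R * R -> \bar R) :
  (forall z, 0 <= F1 z) -> (forall z, F1 z <= F2 z) ->
  cgauss_int s F1 <= cgauss_int s F2.
Proof.
move=> F1_ge0 F12; apply: ge0_le_integralT => [x|x].
  by apply: integral_ge0 => y _; exact: F1_ge0.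
exact: ge0_le_integralT.
Qed.

Lemma cgauss_int_cst (c : \bar R) : cgauss_int s (fun=> c) = c.
Proof.
by rewrite /cgauss_int; under eq_integral do rewrite integral_normal_prob_cst;
  rewrite integral_normal_prob_cst.
Qed.

Lemma iter_cgauss_ge0 n (f : (nat -> R * R) -> \bar R) :
  (forall g, 0 <= f g) -> 0 <= iter_cgauss s n f.
Proof. by elim: n f => [|n IH] f f0 //=; apply: cgauss_int_ge0 => z; exact: IH. Qed.

Lemma iter_cgauss_le n (f1 f2 : (nat -> R * R) -> \bar R) :
  (forall g, 0 <= f1 g) -> (forall g, f1 g <= f2 g) ->
  iter_cgauss s n f1 <= iter_cgauss s n f2.
Proof.
elim: n f1 f2 => [|n IH] f1 f2 f1_ge0 f12 //=.
by apply: cgauss_int_le => z; [exact: iter_cgauss_ge0 | exact: IH].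
Qed.

Lemma iter_cgauss_cst n (c : \bar R) : iter_cgauss s n (fun=> c) = c.
Proof. by elim: n => [|n IH] //=; rewrite IH cgauss_int_cst. Qed.

Lemma iter_cgauss_coord n m (F : R * R -> \bar R) : (m < n)%N ->
  iter_cgauss s n (fun g => F (g m)) = cgauss_int s F.
Proof.
elim: n => [|n IH] //= mn; have [<- | mn'] := eqVneq m n.
  by congr cgauss_int; apply: funext => z; rewrite iter_cgauss_cst.
have mn_lt : (m < n)%N by rewrite ltn_neqAle mn' -ltnS.
by under eq_fun do rewrite IH //; rewrite cgauss_int_cst.
Qed.

Lemma integral_normal_prob_indic (a k : R) (A : set R) : measurable A ->
  (0 <= a)%R -> (0 <= k)%R ->
  \int[normal_prob 0 s]_y (a + k * \1_A y)%:E
    = (a + k * fine (normal_prob 0 s A))%:E.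
Proof.
move=> mA a0 k0; have indic_ge0 y : 0 <= (\1_A y : R)%:E by rewrite lee_fin.
under eq_integral do rewrite EFinD EFinM.
rewrite ge0_integralD //; last 2 first.
- by move=> y _; rewrite mule_ge0.
- by apply: measurable_funeM; exact/measurable_EFinP/measurable_indic.
rewrite integral_normal_prob_cst ge0_integralZl //; last first.
  exact/measurable_EFinP/measurable_indic.
by rewrite integral_indic // setIT EFinD EFinM fineK ?fin_num_measure.
Qed.

Lemma cgauss_int_indicM (a b : R) (A : set R) : measurable A ->
  (0 <= a)%R -> (0 <= b)%R ->
  cgauss_int s (fun z => (a + b * (\1_A z.1 * \1_A z.2))%:E)
    = (a + b * fine (normal_prob 0 s A) ^+ 2)%:E.
Proof.
move=> mA a0 b0; set p := fine _; have p0 : (0 <= p)%R by rewrite fine_ge0.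
rewrite /cgauss_int; under eq_integral => x _.
  under eq_integral do rewrite /= mulrA.
  rewrite integral_normal_prob_indic ?mulr_ge0 // mulrAC.
  over.
by rewrite integral_normal_prob_indic ?mulr_ge0 // -mulrA -expr2.
Qed.

Lemma normal_prob_itv_le (r : R) : s != 0%R -> (0 <= r)%R ->
  (fine (normal_prob 0 s `[- r, r]%classic) <= normal_peak s * r *+ 2)%R.
Proof.
move=> s0 r0; rewrite -lee_fin fineK ?fin_num_measure // /normal_prob.
apply: (@le_trans _ _
  (\int[lebesgue_measure]_(x in `[(- r)%R, r]%classic) (normal_peak s)%:E)).
  apply: ge0_le_integral => //.
  - by move=> x _; rewrite lee_fin normal_pdf_ge0.
  - by apply/measurable_EFinP/measurable_funTS; exact: measurable_normal_pdf.
  - by move=> x _; rewrite lee_fin normal_pdf_ub.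
rewrite integral_cst //; have := lebesgue_measure_itv `[(- r)%R, r].
rewrite /= => ->; case: ifPn => _.
  by rewrite -EFinD -EFinM opprK -mulr2n mulrnAr.
by rewrite mule0 lee_fin mulrn_wge0 ?mulr_ge0 ?normal_peak_ge0.
Qed.

End ComplexGaussian.

Section TrainingLength.
Variables (R : realType) (NRF Nt : nat) (alpha : R) (I : {set 'I_Nt}).
Implicit Type g : nat -> R * R.

Lemma train_len_le g : (train_len NRF alpha I g <= Nt)%N.
Proof. exact: bigminn_le_id. Qed.

Lemma first_elt_le_support j : in_support I j -> (first_elt I <= j)%N.
Proof. by case/mapP => k; rewrite mem_enum => kI ->; exact: first_elt_le. Qed.

Hypothesis I_gt0 : (0 < #|I|)%N.

Lemma first_elt_lt_train_len g : (first_elt I < train_len NRF alpha I g)%N.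
Proof.
apply: leq_bigminn => [|j /andP[/andP[/first_elt_le_support ? _] _]] //.
exact: first_elt_lt.
Qed.

Hypotheses (NRF_gt0 : (0 < NRF)%N) (alpha_ge0 : 0 <= alpha).

Lemma train_len_le_first g : alpha / Nt%:R < pw g (first_elt I) ->
  (train_len NRF alpha I g <= (first_elt I).+1)%N.
Proof.
move=> pw_big; have [k kI kE] := first_eltP I_gt0.
have hnz_first : hnz I g (first_elt I).
  rewrite /hnz kE; apply/andP; split; first by apply/mapP; exists k; rewrite ?mem_enum.
  apply/eqP => gk0; move: pw_big; rewrite kE /pw gk0 /= !expr2 !mul0r addr0.
  by rewrite ltNge divr_ge0.
have B_first : Bset I g (first_elt I) = [:: first_elt I].
  rewrite /Bset -addn1 iotaD filter_cat /= hnz_first add0n.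
  rewrite (@eq_in_filter _ _ pred0) ?filter_pred0 // => l.
  rewrite mem_iota add0n /= => lm; apply/negbTE/negP => /andP[/first_elt_le_support].
  by rewrite leqNgt lm.
have stops_first : stops NRF alpha I g (first_elt I).
  by rewrite /stops hnz_first /topsum B_first /= (minn_idPr NRF_gt0) big_seq1.
by rewrite kE; apply: bigminn_le; rewrite -kE.
Qed.

Lemma train_len_le_indic g r : 0 <= r -> alpha / Nt%:R <= r ^+ 2 ->
  (train_len NRF alpha I g)%:R <= (first_elt I).+1%:R
    + Nt%:R * (\1_`[- r, r] (g (first_elt I)).1
               * \1_`[- r, r] (g (first_elt I)).2) :> R.
Proof.
move=> r_ge0 r_big; set m := first_elt I.
have indic_ge0 x : 0 <= \1_`[- r, r] x :> R by rewrite indicE.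
have [pw_big | pw_small] := ltrP (alpha / Nt%:R) (pw g m).
  apply: (@le_trans _ _ m.+1%:R); first by rewrite ler_nat train_len_le_first.
  by rewrite lerDl mulr_ge0 ?mulr_ge0.
have indic1 x : x ^+ 2 <= alpha / Nt%:R -> \1_`[- r, r] x = 1 :> R.
  move=> x_small; rewrite indicE mem_set //= in_itv /=.
  apply/andP; split; nra.
rewrite !indic1 ?mulr1.
- by rewrite -natrD ler_nat (leq_trans (train_len_le g)) ?leq_addl.
- by apply: le_trans pw_small; rewrite /pw lerDr sqr_ge0.
- by apply: le_trans pw_small; rewrite /pw lerDl sqr_ge0.
Qed.

Lemma expected_train_len_ge (s : R) :
  (((first_elt I).+1%:R)%:E
    <= iter_cgauss s Nt (fun g => ((train_len NRF alpha I g)%:R)%:E))%E.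
Proof.
rewrite -[X in (X <= _)%E](iter_cgauss_cst s Nt).
apply: iter_cgauss_le => g; rewrite lee_fin ?ler0n //.
by rewrite ler_nat first_elt_lt_train_len.
Qed.

Lemma expected_train_len_le (s : R) : s != 0 ->
  (iter_cgauss s Nt (fun g => ((train_len NRF alpha I g)%:R)%:E)
    <= ((first_elt I).+1%:R + 4 * alpha * normal_peak s ^+ 2)%:E)%E.
Proof.
move=> s_neq0; set m := first_elt I; set r := Num.sqrt (alpha / Nt%:R).
have r_ge0 : 0 <= r := sqrtr_ge0 _.
have r2 : r ^+ 2 = alpha / Nt%:R by rewrite sqr_sqrtr ?divr_ge0.
have m_lt : (m < Nt)%N := first_elt_lt I_gt0.
pose F (z : R * R) : \bar R :=
  (m.+1%:R + Nt%:R * (\1_`[- r, r] z.1 * \1_`[- r, r] z.2))%:E.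
apply: (@le_trans _ _ (iter_cgauss s Nt (fun g => F (g m)))).
  apply: iter_cgauss_le => g; rewrite lee_fin ?ler0n //.
  by apply: train_len_le_indic; rewrite ?r2.
rewrite iter_cgauss_coord // cgauss_int_indicM ?ler0n // lee_fin lerD2l.
have p_le := normal_prob_itv_le s_neq0 r_ge0.
apply: (@le_trans _ _ (Nt%:R * (normal_peak s * r *+ 2) ^+ 2)).
  by rewrite ler_wpM2l // !expr2 ler_pM ?fine_ge0 ?measure_ge0.
have Nt_r2 : Nt%:R * r ^+ 2 = alpha.
  by rewrite r2 mulrC divfK // pnatr_eq0 -lt0n (leq_ltn_trans (leq0n m)).
suff -> : Nt%:R * (normal_peak s * r *+ 2) ^+ 2
          = 4 * (Nt%:R * r ^+ 2) * normal_peak s ^+ 2 by rewrite Nt_r2.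
by ring.
Qed.

End TrainingLength.

Theorem lemma1 (R : realType) (L NRF : nat) (alpha : R) :
  (1 <= L)%N -> 0 < alpha -> (NRF = 1%N \/ NRF = L) ->
  exists C : R, exists N0 : nat, forall Nt : nat,
    (N0 <= Nt)%N -> (L <= Nt)%N ->
    (`| avg_train_len L NRF Nt alpha - (Nt%:R / L.+1%:R)%:E | <= C%:E)%E.
Proof.
move=> L_gt0 alpha_gt0 NRF_eq; have NRF_gt0 : (0 < NRF)%N by case: NRF_eq => ->.
set s := sdL R L; have s_neq0 : s != 0.
  by rewrite gt_eqF // sqrtr_gt0 invr_gt0 pmulrn_lgt0 ?ltr0n.
set K := 4 * alpha * normal_peak s ^+ 2.
exists (K + 1), 0%N => Nt _ L_le.
pose P := [pred I : {set 'I_Nt} | #|I| == L].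
pose E (I : {set 'I_Nt}) :=
  iter_cgauss s Nt (fun g => ((train_len NRF alpha I g)%:R)%:E).
have E_bounds I : P I -> E I = (fine (E I))%:E /\
    (first_elt I).+1%:R <= fine (E I) <= (first_elt I).+1%:R + K.
  move=> /eqP I_card; have I_gt0 : (0 < #|I|)%N by rewrite I_card.
  by apply: fine_bounded; rewrite /E expected_train_len_ge ?expected_train_len_le ?ltW.
have card_P : #|[set I : {set 'I_Nt} | #|I| == L]| = #|P| := cardsE P.
have P_gt0 : (0 < #|P|)%N by rewrite -card_P card_draws card_ord bin_gt0.
have := mean_dist_le (f := fine \o E) P_gt0 (fun I PI => (E_bounds I PI).2).
rewrite /avg_train_len (eq_bigr _ (fun I PI => (E_bounds I PI).1)) sumEFin.
rewrite -EFinM -EFinB lee_fin -natr_sum sum_first_elt // -card_P card_draws card_ord.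
rewrite bin_ratio // -[Nt.+1%:R]natr1 mulrDl => mean_le.
apply: le_trans (ler_distD (Nt%:R / L.+1%:R + 1 / L.+1%:R) _ _) _.
rewrite lerD // addrAC subrr add0r ger0_norm ?divr_ge0 //.
by rewrite ler_pdivrMr ?ltr0n // mul1r ler1n.
Qed.
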